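(* Let $P_X$ be any probability distribution on $\mathcal{X}$ and let $(\mu_n)$ be a divergent sequence in $\mathcal{X}$, i.e. $d(\mu_n, \mu) \to \infty$ as $n \to \infty$ for every fixed $\mu \in \mathcal{X}$. Then $D(\mu_n; P_X) \to 0$ as $n \to \infty$.
   Context: $(\mathcal{X}, d)$ is a complete separable metric space with its Borel $\sigma$-algebra. Define $h: \mathcal{X}^3 \to \mathbb{R}$ by $h(x_1, x_2, x_3) := \mathbb{I}( x_3 \notin \{x_1, x_2\} ) \dfrac{ d^2(x_1, x_3) + d^2(x_2, x_3) - d^2(x_1, x_2) }{d(x_1, x_3)\, d(x_2, x_3) }$, where $h := 0$ when $x_3 \in \{x_1,x_2\}$. The metric spatial depth of $\mu \in \mathcal{X}$ with respect to a probability distribution $P_X$ on $\mathcal{X}$ is $D(\mu; P_X) := 1 - \frac{1}{2} \mathrm{E} \{ h(X_1, X_2, \mu) \}$, where $X_1, X_2 \sim P_X$ are independent. *)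

From HB Require Import structures.
From mathcomp Require Import all_boot all_order all_algebra.
From mathcomp Require Import all_classical all_reals all_analysis.
Set Implicit Arguments. Unset Strict Implicit. Unset Printing Implicit Defensive.
Import Order.TTheory GRing.Theory Num.Theory.
Import numFieldNormedType.Exports.
Local Open Scope classical_set_scope.
Local Open Scope ring_scope.

Section MetricDefs.
Context {R : realType} {T : Type} (dist : T -> T -> R).

Definition is_metric : Prop :=
  [/\ (forall x y, 0 <= dist x y),
      (forall x y, dist x y = 0 <-> x = y),
      (forall x y, dist x y = dist y x) &
      (forall x y z, dist x z <= dist x y + dist y z)].

Definition dopen (A : set T) : Prop :=
  forall x, A x -> exists e : R, 0 < e /\ [set y | dist x y < e] `<=` A.

Definition dcomplete : Prop :=
  forall u : nat -> T,
    (forall e : R, 0 < e -> exists N : nat, forall m n : nat,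
        (N <= m)%N -> (N <= n)%N -> dist (u m) (u n) < e) ->
    exists l : T, dist (u n) l @[n --> \oo] --> 0.

Definition dseparable : Prop :=
  exists S : set T, countable S /\
    forall x (e : R), 0 < e -> exists s, S s /\ dist x s < e.
End MetricDefs.

Definition is_borel_for {R : realType} {d : measure_display}
  (T : measurableType d) (dist : T -> T -> R) : Prop :=
  (@measurable d T) = <<s [set A | dopen dist A] >>.

Definition hker {R : realType} {T : eqType} (dist : T -> T -> R)
  (x1 x2 x3 : T) : R :=
  if (x3 == x1) || (x3 == x2) then 0
  else (dist x1 x3 ^+ 2 + dist x2 x3 ^+ 2 - dist x1 x2 ^+ 2)
         / (dist x1 x3 * dist x2 x3).

(* metric spatial depth D(mu; P) = 1 - 1/2 E h(X1, X2, mu), X1, X2 iid ~ P;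
   the expectation is the integral against the product measure P \x P *)
Definition msdepth {R : realType} {d : measure_display} {T : measurableType d}
  (dist : T -> T -> R) (P : probability T R) (mu : T) : R :=
  1 - 2^-1 * fine (\int[P \x P]_z (hker dist z.1 z.2 mu)%:E)%E.

From HB Require Import structures.
From mathcomp Require Import all_boot all_order all_algebra.
From mathcomp Require Import ring lra.
From mathcomp Require Import all_classical all_reals all_analysis.
From mathcomp Require Import measurable_realfun.
Import Order.TTheory GRing.Theory Num.Theory.
Import numFieldNormedType.Exports.
Set Implicit Arguments. Unset Strict Implicit. Unset Printing Implicit Defensive.
Local Open Scope classical_set_scope.
Local Open Scope ring_scope.

(* Writing a = d(x1, m), b = d(x2, m), c = d(x1, x2), the kernel is
   h(x1, x2, m) = (a^2 + b^2 - c^2) / (a b), a "cosine ratio" of the triangle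
   (x1, x2, m).  The triangle inequalities |a - b| <= c <= a + b give
     |h| <= 2   and   0 <= 2 - h <= c^2 / (a b)   (when a b > 0),
   so h(x1, x2, mu_n) -> 2 pointwise as mu_n escapes to infinity.  Since the
   integrand is bounded by 2, bounded (dominated) convergence on the product
   probability P x P gives E h(X1, X2, mu_n) -> 2, hence D(mu_n; P) -> 0.
   The file proves, in order: the real-algebra bounds on the cosine ratio; the
   corresponding metric facts about h; measurability of h on T x T (the
   distance is jointly Borel because the space is separable); bounded
   convergence on a probability space; and finally the theorem. *)

Section CosineRatio.
Variable R : realFieldType.

(* (a^2 + b^2 - c^2) / (a b): twice the cosine of the angle opposite to c in a
   triangle with sides a, b, c (and 0 when a b = 0). *)
Definition cosine_ratio (a b c : R) : R := (a ^+ 2 + b ^+ 2 - c ^+ 2) / (a * b).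

Lemma two_sub_cosine_ratio (a b c : R) : a * b != 0 ->
  2 - cosine_ratio a b c = (c ^+ 2 - (a - b) ^+ 2) / (a * b).
Proof.
move=> ab_neq0; apply: (mulIf ab_neq0).
by rewrite /cosine_ratio mulrBl !divfK //; ring.
Qed.

Lemma sqr_sub_le_sqr (a b c : R) : `|a - b| <= c -> (a - b) ^+ 2 <= c ^+ 2.
Proof.
by move=> c_ge; rewrite -real_normK ?num_real // ler_sqr ?nnegrE ?(le_trans _ c_ge).
Qed.

Lemma cosine_ratio_gap_bounds (a b c : R) : `|a - b| <= c -> 0 < a * b ->
  0 <= 2 - cosine_ratio a b c <= c ^+ 2 / (a * b).
Proof.
move=> c_ge ab_gt0; rewrite two_sub_cosine_ratio ?gt_eqF //.
have sqr_le := sqr_sub_le_sqr c_ge; have sqr_nneg := sqr_ge0 (a - b).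
rewrite divr_ge0 ?subr_ge0 ?(ltW ab_gt0) //=.
by rewrite mulrBl lerBlDr lerDl divr_ge0 ?(ltW ab_gt0).
Qed.

(* With both triangle inequalities the cosine ratio lies in [-2, 2]; the lower
   bound is c <= a + b, i.e. c^2 - (a - b)^2 <= 4 a b. *)
Lemma cosine_ratio_norm_le2 (a b c : R) : 0 <= a -> 0 <= b ->
  `|a - b| <= c -> c <= a + b -> `|cosine_ratio a b c| <= 2.
Proof.
move=> a_ge0 b_ge0 c_ge c_le.
have [ab0|ab_neq0] := eqVneq (a * b) 0.
  by rewrite /cosine_ratio ab0 invr0 mulr0 normr0.
have ab_gt0 : 0 < a * b by rewrite lt_def ab_neq0 mulr_ge0.
have /andP[gap_ge0 _] := cosine_ratio_gap_bounds c_ge ab_gt0.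
have c2_le : c ^+ 2 <= (a - b) ^+ 2 + 4 * (a * b).
  have -> : (a - b) ^+ 2 + 4 * (a * b) = (a + b) ^+ 2 by ring.
  by rewrite ler_sqr ?nnegrE ?addr_ge0 ?(le_trans _ c_ge).
have gap_le4 : 2 - cosine_ratio a b c <= 4.
  by rewrite two_sub_cosine_ratio // ler_pdivrMr //; lra.
by rewrite ler_norml; apply/andP; split; lra.
Qed.

End CosineRatio.

Section MetricKernel.
Context {R : realType} {T : eqType} (dist : T -> T -> R).
Hypothesis dist_metric : is_metric dist.

(* The kernel h is the cosine ratio of the triangle (x1, x2, m); the degenerate
   case m in {x1, x2} agrees since then a b = 0. *)
Lemma hker_cosine x1 x2 m :
  hker dist x1 x2 m = cosine_ratio (dist x1 m) (dist x2 m) (dist x1 x2).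
Proof.
have [_ dist0 _ _] := dist_metric.
rewrite /hker /cosine_ratio; case: ifP => [/orP[]/eqP <-|_] //.
  by rewrite (proj2 (dist0 m m)) // mul0r invr0 mulr0.
by rewrite (proj2 (dist0 m m)) // mulr0 invr0 mulr0.
Qed.

Lemma dist_sub_le x1 x2 m : `|dist x1 m - dist x2 m| <= dist x1 x2.
Proof.
have [_ _ dsym dtri] := dist_metric.
have tri1 := dtri x1 x2 m; have tri2 := dtri x2 x1 m; rewrite (dsym x2 x1) in tri2.
by rewrite ler_norml; apply/andP; split; lra.
Qed.

Lemma hker_norm_le2 x1 x2 m : `|hker dist x1 x2 m| <= 2.
Proof.
have [dist_ge0 _ dsym dtri] := dist_metric.
rewrite hker_cosine; apply: cosine_ratio_norm_le2 => //.
  exact: dist_sub_le.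
by rewrite (dsym x2 m); exact: dtri.
Qed.

Lemma hker_gap_bounds x1 x2 m : 0 < dist x1 m * dist x2 m ->
  0 <= 2 - hker dist x1 x2 m <= dist x1 x2 ^+ 2 / (dist x1 m * dist x2 m).
Proof.
by move=> ab_gt0; rewrite hker_cosine cosine_ratio_gap_bounds ?dist_sub_le.
Qed.

Lemma hker_cvg2 (mu_ : nat -> T) :
  (forall m, dist (mu_ n) m @[n --> \oo] --> +oo) ->
  forall x1 x2, hker dist x1 x2 (mu_ n) @[n --> \oo] --> (2 : R).
Proof.
move=> mu_div x1 x2; have [_ _ dsym _] := dist_metric.
apply/cvgrPdist_lt => e e_gt0.
(* Once d(x1, mu_n) and d(x2, mu_n) exceed M >= 1, the defect is at most
   d(x1, x2)^2 / M < e. *)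
pose M := dist x1 x2 ^+ 2 / e + 1.
have M_ge1 : 1 <= M by rewrite lerDr divr_ge0 ?sqr_ge0 ?ltW.
have eM : e * M = dist x1 x2 ^+ 2 + e by rewrite mulrDr mulr1 mulrC divfK ?gt_eqF.
have /cvgryPge/(_ M) far1 := mu_div x1.
have /cvgryPge/(_ M) far2 := mu_div x2.
near=> n.
have M_le1 : M <= dist x1 (mu_ n) by rewrite dsym; near: n.
have M_le2 : M <= dist x2 (mu_ n) by rewrite dsym; near: n.
have M_le : M <= dist x1 (mu_ n) * dist x2 (mu_ n).
  by rewrite -[M]mulr1; apply: ler_pM => //; lra.
have ab_gt0 : 0 < dist x1 (mu_ n) * dist x2 (mu_ n) by lra.
have /andP[gap_ge0 gap_le] := hker_gap_bounds ab_gt0.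
rewrite ger0_norm //; apply: (le_lt_trans gap_le).
rewrite ltr_pdivrMr //.
have : e * M <= e * (dist x1 (mu_ n) * dist x2 (mu_ n)) by rewrite ler_pM2l.
by rewrite eM mulrC; lra.
Unshelve. all: end_near.
Qed.

End MetricKernel.

Lemma dense_seq_of_separable {R : realType} {T : Type} (dist : T -> T -> R)
    (x0 : T) : dseparable dist ->
  exists u : nat -> T, forall x (e : R), 0 < e -> exists n, dist x (u n) < e.
Proof.
move=> [S [/countable_injP [f f_inj] S_dense]].
exists ('pinv_(fun=> x0) S f) => x e e_gt0.
have [s [Ss dist_xs]] := S_dense x e e_gt0.
by exists (f s); rewrite pinvKV // inE.
Qed.

(* Inversion on the reals (with 0^-1 = 0) is Borel measurable: it is continuous
   away from the closed set {0}. *)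
Lemma measurable_inv (R : realType) : measurable_fun (setT : set R) GRing.inv.
Proof.
have -> : (GRing.inv : R -> R) = fun x => if x == 0 then 0 else x^-1.
  by apply/funext => x; case: eqP => // ->; rewrite invr0.
apply: measurable_fun_if => //.
  by apply: measurable_fun_eqr => //; exact: measurable_cst.
have -> : setT `&` (fun x : R => x == 0) @^-1` [set false] = ~` [set 0].
  by apply/seteqP; split => x /=; [case=> _ /negbT/eqP | move=> /eqP/negbTE ->].
apply: open_continuous_measurable_fun.
  by rewrite openC; apply: compact_closed; [exact: Rhausdorff | exact: finite_compact].
by move=> x; rewrite inE /= => /eqP x_neq0; exact: inv_continuous.
Qed.

Section DistMeasurable.
Context {R : realType} {d : measure_display} {T : measurableType d}.
Context (dist : T -> T -> R).
Hypotheses (dist_metric : is_metric dist) (dist_borel : is_borel_for dist).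

(* The distance to a fixed point is measurable: the sublevel sets
   {x | d(x, m) < r} are open balls, hence Borel. *)
Lemma measurable_dist_to (m : T) : measurable_fun setT (dist ^~ m).
Proof.
have [_ _ dsym dtri] := dist_metric.
move=> _; apply: (measurability _ (RGenInftyO.measurableE R)) => //.
move=> /= _ [_ [r ->] <-]; rewrite setTI dist_borel.
apply: sub_sigma_algebra => y /=; rewrite in_itv /= => dist_lt.
exists (r - dist y m); split; first by rewrite subr_gt0.
move=> z /=; rewrite in_itv /= => dist_yz; have := dtri z y m.
by rewrite (dsym z y); lra.
Qed.

(* On a separable space the distance is jointly measurable, since
   {d(x, y) < r} is the countable union over a dense sequence u of the
   measurable sets {d(x, u n) + d(y, u n) < r}. *)
Lemma measurable_dist : dseparable dist ->
  measurable_fun setT (fun z : T * T => dist z.1 z.2).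
Proof.
have [_ _ dsym dtri] := dist_metric.
move=> /(dense_seq_of_separable point) [u u_dense].
pose via n (z : T * T) := dist z.1 (u n) + dist z.2 (u n).
have via_meas n : measurable_fun setT (via n).
  by apply: measurable_funD;
    [exact: measurableT_comp (measurable_dist_to _) measurable_fst
    |exact: measurableT_comp (measurable_dist_to _) measurable_snd].
move=> _; apply: (measurability _ (RGenInftyO.measurableE R)) => //.
move=> /= _ [_ [r ->] <-]; rewrite setTI.
suff -> : (fun z : T * T => dist z.1 z.2) @^-1` `]-oo, r[ =
    \bigcup_n (setT `&` via n @^-1` `]-oo, r[).
  by apply: bigcupT_measurable => n; exact: via_meas.
apply/seteqP; split => z /=; rewrite ?in_itv /=.
  move=> dist_lt.
  have e_gt0 : 0 < (r - dist z.1 z.2) / 2 by rewrite divr_gt0 // subr_gt0.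
  have [n dist_un] := u_dense z.1 _ e_gt0.
  exists n => //; split => //; rewrite /= in_itv /= /via.
  have halfK : (r - dist z.1 z.2) / 2 * 2 = r - dist z.1 z.2.
    by rewrite divfK ?pnatr_eq0.
  by have := dtri z.2 z.1 (u n); rewrite (dsym z.2 z.1); lra.
move=> [n _ [_]]; rewrite /= in_itv /= /via (dsym z.2) => via_lt.
exact: le_lt_trans (dtri _ _ _) via_lt.
Qed.

Lemma measurable_hker (m : T) : dseparable dist ->
  measurable_fun setT (fun z : T * T => hker dist z.1 z.2 m).
Proof.
move=> sep.
have dist1 : measurable_fun setT (fun z : T * T => dist z.1 m).
  exact: measurableT_comp (measurable_dist_to m) measurable_fst.
have dist2 : measurable_fun setT (fun z : T * T => dist z.2 m).
  exact: measurableT_comp (measurable_dist_to m) measurable_snd.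
under eq_fun do rewrite (hker_cosine dist_metric).
apply: measurable_funM.
  apply: measurable_funB; last exact: measurable_funX (measurable_dist sep).
  by apply: measurable_funD; exact: measurable_funX.
by apply: measurableT_comp (@measurable_inv R) _; exact: measurable_funM.
Qed.

End DistMeasurable.

Lemma probability_bounded_cvg {R : realType} {d : measure_display}
    {U : measurableType d} (Q : probability U R) (f_ : nat -> U -> R) (M l : R) :
  (forall n, measurable_fun setT (f_ n)) ->
  (forall n x, `|f_ n x| <= M) ->
  (forall x, f_ n x @[n --> \oo] --> l) ->
  fine (\int[Q]_x (f_ n x)%:E)%E @[n --> \oo] --> l.
Proof.
move=> f_meas f_bound f_cvg.
have Q1 : (Q : {measure set U -> \bar R}) setT = 1%E := probability_setT Q.
have int_cst (r : R) : (\int[Q]_x (cst r%:E) x = r%:E)%E.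
  by rewrite integral_cst // Q1 mule1.
have fE_meas n : measurable_fun setT (fun x => (f_ n x)%:E).
  exact/measurable_EFinP.
have fE_cvg : {ae Q, forall x, setT x ->
    (fun n => (f_ n x)%:E) @ \oo --> (cst l%:E : U -> \bar R) x}.
  by apply: aeW => x _; apply/fine_cvgP; split; [exact: nearW | exact: f_cvg].
have fE_bound : {ae Q, forall x n, setT x ->
    (`|(f_ n x)%:E| <= (cst M%:E : U -> \bar R) x)%E}.
  by apply: aeW => x n _; rewrite /= lee_fin.
have M_int : Q.-integrable setT (cst M%:E : U -> \bar R).
  exact: finite_measure_integrable_cst.
have [_ _] := dominated_convergence measurableT fE_meas (measurable_cst _)
  fE_cvg M_int fE_bound.
by rewrite int_cst => /fine_cvg.
Qed.

Theorem theorem4 (R : realType) (d : measure_display) (T : measurableType d)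
  (dist : T -> T -> R)
  (hmetric : is_metric dist) (hborel : is_borel_for dist)
  (hcomplete : dcomplete dist) (hsep : dseparable dist)
  (P : probability T R) (mu_ : nat -> T)
  (hdiv : forall m : T, dist (mu_ n) m @[n --> \oo] --> +oo) :
  msdepth dist P (mu_ n) @[n --> \oo] --> 0.
Proof.
have E_hker_cvg : fine (\int[P \x P]_z (hker dist z.1 z.2 (mu_ n))%:E)%E
    @[n --> \oo] --> (2 : R).
  apply: (@probability_bounded_cvg _ _ _ _ (fun n z => hker dist z.1 z.2 (mu_ n)) 2).
  - by move=> n; exact: measurable_hker.
  - by move=> n z; exact: hker_norm_le2.
  - by move=> z; exact: hker_cvg2.
have -> : (0 : R) = 1 - 2^-1 * 2 by rewrite mulVf ?subrr // pnatr_eq0.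
exact: cvgB (cvg_cst _) (cvgM (cvg_cst _) E_hker_cvg).
Qed.
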